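(* Let $P$ be a simple $d$-dimensional $k$-template and let $\kappa\ge\aleph_0$ be a cardinal. If $X$ is a set with $|X|\le\kappa^{+(d-1)}$, then $\chi(L(X^d,P))\le\kappa$.
   Context: Here $1\le d<\omega$, $2\le k<\omega$. A $d$-dimensional $k$-template is a set $P$ of $d$-tuples with $|P|=k$. $P$ is simple if for every $m<d$ there are $x,y\in P$ such that for all $i<d$, $x_i=y_i$ iff $i\neq m$. If $P,Q$ are $d$-dimensional templates, $Q$ is a homomorphic image of $P$ if there is a surjection $f:P\to Q$ such that for all $x,y\in P$ and $i<d$, $x_i=y_i$ implies $f(x)_i=f(y)_i$. $L(X^d,P)$ is the $k$-hypergraph with vertex set $X^d$ whose edges are the $k$-templates $Q\subseteq X^d$ that are homomorphic images of $P$. $\chi$ is the chromatic number (least cardinal number of colors in a vertex coloring not constant on any edge). $\kappa^+$ is the successor cardinal, $\kappa^{+0}=\kappa$, $\kappa^{+(n+1)}=(\kappa^{+n})^+$. *)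

From mathcomp Require Import all_boot.
Set Implicit Arguments. Unset Strict Implicit. Unset Printing Implicit Defensive.

Definition tup (d : nat) (A : Type) := 'I_d -> A.

Definition enumerates (d k : nat) (A : Type) (e : 'I_k -> tup d A)
    (S : tup d A -> Prop) : Prop :=
  injective e /\ forall x, S x <-> exists a, e a = x.

Definition template (d k : nat) (A : Type) (P : tup d A -> Prop) : Prop :=
  exists e : 'I_k -> tup d A, enumerates e P.

Definition simple_template (d : nat) (A : Type) (P : tup d A -> Prop) : Prop :=
  forall m : 'I_d, exists x y, P x /\ P y /\
    (forall i : 'I_d, x i = y i <-> i <> m).

Definition hom_image (d : nat) (A B : Type)
    (P : tup d A -> Prop) (Q : tup d B -> Prop) : Prop :=
  exists f : tup d A -> tup d B,
    (forall x, P x -> Q (f x)) /\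
    (forall y, Q y -> exists x, P x /\ f x = y) /\
    (forall x y, P x -> P y -> forall i : 'I_d, x i = y i -> f x i = f y i).

Definition L_edge (d k : nat) (A X : Type) (P : tup d A -> Prop)
    (Q : tup d X -> Prop) : Prop :=
  template k Q /\ hom_image P Q.

Definition proper_coloring (d k : nat) (A X C : Type) (P : tup d A -> Prop)
    (c : tup d X -> C) : Prop :=
  forall Q, L_edge k P Q -> ~ (exists col, forall x, Q x -> c x = col).

Definition strict_wellorder (X : Type) (R : X -> X -> Prop) : Prop :=
  well_founded R /\ (forall x y z, R x y -> R y z -> R x z) /\
  (forall x y, x = y \/ R x y \/ R y x).

(* card_le_succ n K X  <->  |X| <= |K|^{+n}.
   |X| <= mu^+  iff X admits a well-order all of whose proper initial
   segments have cardinality <= mu (mu^+ = set of ordinals of size <= mu). *)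
Fixpoint card_le_succ (n : nat) (K X : Type) : Prop :=
  match n with
  | 0 => exists f : X -> K, injective f
  | S n' => exists R : X -> X -> Prop, strict_wellorder R /\
            forall x : X, card_le_succ n' K {y : X | R y x}
  end.

Definition infinite_type (K : Type) : Prop := exists f : nat -> K, injective f.

From mathcomp Require Import all_boot zify.
From mathcomp Require Import boolp classical_sets cardinality.
From Stdlib Require Import Wellfounded.
Set Implicit Arguments. Unset Strict Implicit. Unset Printing Implicit Defensive.
Local Open Scope classical_set_scope.

(* Colour X^d by pairs (m, g) with m < d and g in K such that no two tuples of
   one colour (m, g) differ exactly in coordinate m.  Such a colouring is proper
   for L(X^d, P): P is simple, so a homomorphic image Q of P contains two points
   differing exactly in any prescribed coordinate, and Q injects P.
   The colouring is built by induction on d.  Well-order X so that initial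
   segments have size at most K^{+(d-2)}; colour x through a largest coordinate
   a = x_j, colouring the other coordinates (which lie below a or equal a) with
   the inductive colouring of the segment below a plus one point, and record j
   in the colour.  Finally d * nat * K injects into K because 2 * K does, which
   follows from a maximal disjoint family of injective sequences in K (Zorn). *)

Lemma maximal_disjoint_sequences_cofinite (K : pointedType) (E : set (nat -> K)) :
  maximal_disjoint_subcollection (fun s => range s) E [set s | injective s] ->
  finite_set (~` \bigcup_(s in E) range s).
Proof.
move=> [E_inj E_disj E_max].
apply: contrapT => /infiniteP/pcard_leP/injfunPex [s s_left /in2TT s_inj].
have s_new : ~ E s by move=> Es; apply: (s_left 0 I); exists s => //; exists 0.
apply: (E_max (E `|` [set s])).
- by split=> [t|/(_ s (or_intror erefl))]; [left|].
- by move=> t [/E_inj|->].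
move=> t t' [Et|->] [Et'|->] //.
- exact: E_disj.
- move=> [z [[i _ iz] [j _ jz]]]; case: (s_left j I).
  by rewrite jz -iz; exists t => //; exists i.
- move=> [z [[j _ jz] [i _ iz]]]; case: (s_left j I).
  by rewrite jz -iz; exists t' => //; exists i.
Qed.

Lemma infinite_bool_prod_inj (K : Type) :
  infinite_type K -> exists h : bool * K -> K, injective h.
Proof.
elim/Ppointed: K => [K [f _]|K [f f_inj]]; first by case: (no (f 0)).
have [E E_max] := ex_maximal_disjoint_subcollection (fun s : nat -> K => range s)
  [set s | injective s].
have left_fin := maximal_disjoint_sequences_cofinite E_max.
case: E_max => E_inj E_disj _.
pose covered := \bigcup_(s in E) range s.
have [s0 Es0] : exists s0, E s0.
  apply: contrapT => noE; apply/infiniteP: left_fin; apply/pcard_leP/injfunPex.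
  exists f => [n _ [s Es _]|]; [by apply: noE; exists s | exact: in2W].
have [idx idx_inj] := pcard_injP (finite_set_countable left_fin).
have /choice[rep rep_spec] :
    forall k, exists p : (nat -> K) * nat, covered k -> E p.1 /\ p.1 p.2 = k.
  move=> k; have [[s Es [i _ <-]]|nck] := pselect (covered k).
    by exists (s, i).
  by exists (s0, 0).
have E_meet s s' i j : E s -> E s' -> s i = s' j -> s = s' /\ i = j.
  move=> Es Es' sij; have ss' : s = s'.
    by apply: E_disj => //; exists (s i); split; [exists i | exists j].
  by split=> //; apply: (E_inj _ Es); rewrite sij ss'.
(* A covered point s i goes to s (4 i + b); the finitely many others, indexed
   by idx, go to s0 (4 idx + 2 + b). *)
exists (fun '((b, k) : bool * K) =>
  if pselect (covered k) then (rep k).1 (4 * (rep k).2 + b) else s0 (4 * idx k + 2 + b)).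
move=> [b k] [b' k'] /=; case: pselect => ck; case: pselect => ck' /=.
- move: (rep_spec k ck) (rep_spec k' ck').
  case: (rep k) (rep k') => [s i] [s' i'] /= [Es <-] [Es' <-].
  move=> /(E_meet _ _ _ _ Es Es') [-> ii'].
  by have [-> ->] : i = i' /\ b = b' by move: ii'; case: b b' => [] [] /=; lia.
- case: (rep_spec k ck) => Es _ /(E_meet _ _ _ _ Es Es0) [_].
  by case: b b' => [] [] /=; lia.
- case: (rep_spec k' ck') => Es' _ /esym /(E_meet _ _ _ _ Es' Es0) [_].
  by case: b b' => [] [] /=; lia.
- move=> /(E_inj _ Es0) ii'.
  have [? ->] : idx k = idx k' /\ b = b' by move: ii'; case: b b' => [] [] /=; lia.
  by rewrite (idx_inj _ _ (mem_set ck) (mem_set ck')).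
Qed.

Lemma nat_prod_inj (K : Type) (h : bool * K -> K) :
  injective h -> exists e : nat * K -> K, injective e.
Proof.
move=> h_inj; exists (fun '(i, k) => iter i (fun u => h (true, u)) (h (false, k))).
move=> [i k] [j l] /=; elim: i j => [|i IH] [|j] /= /h_inj [] //.
- by move=> ->.
- by move=> /IH [-> ->].
Qed.

Lemma card_le_succ_void n (K Z : Type) : (Z -> False) -> card_le_succ n K Z.
Proof.
elim: n Z => [|n IH] Z Z0 /=; first by exists (fun z => match Z0 z with end) => z.
exists (fun _ _ => False); split; last by move=> z; case: (Z0 z).
by split=> [z|]; [constructor=> y [] | split=> // z; case: (Z0 z)].
Qed.

Lemma card_le_succ_inj n (K Y Z : Type) (h : Z -> Y) :
  injective h -> card_le_succ n K Y -> card_le_succ n K Z.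
Proof.
elim: n Y Z h => [|n IH] Y Z h h_inj /=.
  by case=> g g_inj; exists (g \o h) => z z' /g_inj/h_inj.
case=> R [[R_wf [R_tr R_tot]] R_seg].
exists (fun z z' => R (h z) (h z')); split.
  split; first exact: wf_inverse_image.
  split=> [z z' z'' |z z']; first exact: R_tr.
  by case: (R_tot (h z) (h z')) => [/h_inj|]; auto.
move=> z; pose hz (y : {y | R (h y) (h z)}) := exist (R^~ (h z)) (h (sval y)) (svalP y).
apply: (IH _ _ hz _ (R_seg (h z))).
by move=> [y Ry] [y' Ry'] [/h_inj yy']; exact: eq_exist.
Qed.

Definition opt_lt (Y : Type) (R : Y -> Y -> Prop) (o o' : option Y) : Prop :=
  match o, o' with
  | None, Some _ => True
  | Some y, Some y' => R y y'
  | _, _ => False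
  end.

Lemma strict_wellorder_opt_lt (Y : Type) (R : Y -> Y -> Prop) :
  strict_wellorder R -> strict_wellorder (opt_lt R).
Proof.
move=> [R_wf [R_tr R_tot]]; split; last split.
- have acc_none : Acc (opt_lt R) None by constructor=> -[y|] [].
  move=> [y|]; last exact: acc_none.
  elim: (R_wf y) => {}y _ IH.
  by constructor=> -[z Rzy|_]; [exact: IH | exact: acc_none].
- by move=> [x|] [y|] [z|] //=; apply: R_tr.
- move=> [x|] [y|] /=; [|by right; right|by right; left|by left].
  by case: (R_tot x y) => [->|]; [left|right].
Qed.

Lemma card_le_succ_option n (K Y : Type) (o : option K -> K) :
  injective o -> card_le_succ n K Y -> card_le_succ n K (option Y).
Proof.
move=> o_inj; elim: n Y => [|n IH] Y /=.
  case=> g g_inj; exists (o \o omap g).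
  by move=> [y|] [y'|] /o_inj //= [/g_inj ->].
case=> R [R_wo R_seg]; exists (opt_lt R); split; first exact: strict_wellorder_opt_lt.
move=> [y|]; last by apply: card_le_succ_void => -[[z|] []].
pose seg (z : {o | opt_lt R o (Some y)}) : option {z | R z y} :=
  if z is exist (Some z) Rzy then Some (exist _ z Rzy) else None.
apply: (card_le_succ_inj (h := seg) _ (IH _ (R_seg y))).
move=> [[z|] Rzy] [[z'|] Rzy'] //= => [[zz']|_]; apply: eq_exist => //.
by rewrite zz'.
Qed.

Definition differ_only_at (d : nat) (Y : Type) (x y : tup d Y) (m : 'I_d) : Prop :=
  (forall i, i <> m -> x i = y i) /\ x m <> y m.

Definition axis_coloring (d : nat) (Y C : Type) (c : tup d Y -> 'I_d * C) : Prop :=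
  forall x y m, differ_only_at x y m -> c x = c y -> (c x).1 <> m.

Lemma exists_maximal_index (I : finType) (Y : Type) (R : Y -> Y -> Prop)
    (x : I -> Y) (i0 : I) :
  (forall y, ~ R y y) -> (forall y z w, R y z -> R z w -> R y w) ->
  exists j, forall i, ~ R (x j) (x i).
Proof.
move=> R_irr R_tr.
suff [j j_max] : exists j, forall i, i \in enum I -> ~ R (x j) (x i).
  by exists j => i; apply: j_max; rewrite mem_enum.
elim: (enum I) => [|i s [j j_max]]; first by exists i0.
have [Rji|nRji] := pselect (R (x j) (x i)).
  exists i => i'; rewrite inE => /predU1P [->|/j_max nRji' Rii']; first exact: R_irr.
  exact/nRji'/(R_tr _ _ _ Rji Rii').
by exists j => i'; rewrite inE => /predU1P [->|/j_max].
Qed.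

Definition below (Y : Type) (R : Y -> Y -> Prop) (a z : Y) : option {y | R y a} :=
  if pselect (R z a) is left Rza then Some (exist _ z Rza) else None.

Lemma below_inj (Y : Type) (R : Y -> Y -> Prop) (a z z' : Y) :
  (forall y y', y = y' \/ R y y' \/ R y' y) ->
  ~ R a z -> ~ R a z' -> below R a z = below R a z' -> z = z'.
Proof.
move=> R_tot nRaz nRaz'; rewrite /below.
case: pselect => [Rza|nRza]; case: pselect => [Rz'a|nRz'a] //; first by case.
by move=> _; case: (R_tot z a) (R_tot z' a) => [->|[]//] [->|[]//].
Qed.

Lemma axis_coloring_step (K : Type) (e : nat * K -> K) n (Y : Type)
    (R : Y -> Y -> Prop) :
  injective e -> strict_wellorder R ->
  (forall a, exists c : tup n.+1 (option {y | R y a}) -> 'I_n.+1 * K, axis_coloring c) ->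
  exists c : tup n.+2 Y -> 'I_n.+2 * K, axis_coloring c.
Proof.
move=> e_inj [R_wf [R_tr R_tot]] inner_ex.
have R_irr y : ~ R y y.
  by elim: (R_wf y) => z _ IH Rzz; exact: (IH z Rzz Rzz).
pose inner a := sval (cid (inner_ex a)).
have inner_axis a : axis_coloring (inner a) := svalP (cid (inner_ex a)).
have /choice[top top_max] : forall x : tup n.+2 Y, exists j, forall i, ~ R (x j) (x i).
  by move=> x; apply: exists_maximal_index ord0 R_irr R_tr.
(* None stands for the coordinates equal to the top value a. *)
pose col (j : 'I_n.+2) a (x : tup n.+2 Y) :=
  let c := inner a (fun i => below R a (x (lift j i))) in (lift j c.1, e (val j, c.2)).
exists (fun x => col (top x) (x (top x)) x) => x y m [xy_off xy_m] xy_col.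
have top_xy : top y = top x by move/(f_equal snd)/e_inj: xy_col => -[/val_inj].
move: xy_col; rewrite top_xy; set j := top x => xy_col col_m.
have jm : j != m by rewrite -col_m /= neq_lift.
have xy_j : y j = x j by apply/esym/xy_off/eqP.
move: xy_col col_m; rewrite xy_j /col /=; set a := x j.
set px := fun i => below R a (x (lift j i)); set py := fun i => below R a (y (lift j i)).
case cx : (inner a px) => [t u]; case cy : (inner a py) => [t' u'] /=.
move=> /pair_equal_spec [/lift_inj tt' /e_inj [uu']] jt_m; subst t' u'.
apply: (inner_axis a px py t); rewrite ?cx ?cy //; split.
- by move=> i it; rewrite /px /py xy_off // -jt_m => /lift_inj /it.
- have nRaym : ~ R a (y m) by have := top_max y m; rewrite top_xy xy_j.
  by rewrite /px /py jt_m => /(below_inj R_tot (top_max x m) nRaym).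
Qed.

Lemma onto_enumerated_inj d k (A B : Type) (eP : 'I_k -> tup d A) (eQ : 'I_k -> tup d B)
    (P : tup d A -> Prop) (Q : tup d B -> Prop) (g : tup d A -> tup d B) :
  enumerates eP P -> enumerates eQ Q ->
  (forall x, P x -> Q (g x)) -> (forall y, Q y -> exists x, P x /\ g x = y) ->
  forall x y, P x -> P y -> g x = g y -> x = y.
Proof.
move=> [eP_inj P_eP] [eQ_inj Q_eQ] gPQ g_onto.
have /choice[phi phiE] : forall a, exists b, eQ b = g (eP a).
  by move=> a; apply/Q_eQ/gPQ/P_eP; exists a.
have phi_onto b : b \in codom phi.
  have [x [/P_eP [a <-] gx]] := g_onto (eQ b) (proj2 (Q_eQ _) (ex_intro _ b erefl)).
  by apply/codomP; exists a; apply: eQ_inj; rewrite phiE gx.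
have /image_injP phi_inj : #|codom phi| == #|'I_k|.
  by rewrite (eq_cardT phi_onto) cardE.
move=> x y /P_eP [a <-] /P_eP [b <-] gab.
by congr eP; apply: phi_inj => //; apply: eQ_inj; rewrite !phiE.
Qed.

Lemma axis_coloring_proper n k (A X C : Type) (P : tup n.+1 A -> Prop)
    (c : tup n.+1 X -> 'I_n.+1 * C) :
  template k P -> simple_template P -> axis_coloring c -> proper_coloring k P c.
Proof.
move=> [eP P_enum] P_simple c_axis Q [[eQ Q_enum] [g [gPQ [g_onto g_hom]]]] [col Q_col].
have g_inj := onto_enumerated_inj P_enum Q_enum gPQ g_onto.
have [x [y [Px [Py xy]]]] := P_simple col.1.
have g_off i : i <> col.1 -> g x i = g y i by move/xy/(g_hom _ _ Px Py).
have gxy : differ_only_at (g x) (g y) col.1.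
  split=> // gxy_m; suff /(g_inj _ _ Px Py) x_y : g x = g y.
    by move: (xy col.1); rewrite x_y => -[/(_ erefl) /(_ erefl)].
  by apply: funext => i; case: (eqVneq i col.1) => [->|/eqP]; [|exact: g_off].
by apply: (c_axis _ _ _ gxy); rewrite !Q_col //; apply: gPQ.
Qed.

Lemma proper_coloring_inj d k (A X C C' : Type) (P : tup d A -> Prop)
    (c : tup d X -> C) (f : C -> C') :
  (exists x, P x) -> injective f -> proper_coloring k P c -> proper_coloring k P (f \o c).
Proof.
move=> [x Px] f_inj c_proper Q Q_edge [col Q_col]; apply: (c_proper Q Q_edge).
have [_ [g [gPQ _]]] := Q_edge.
exists (c (g x)) => y Qy; apply: f_inj.
by move: (Q_col y Qy) (Q_col _ (gPQ x Px)) => /= -> ->.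
Qed.

Lemma axis_coloring_exists (K : Type) (e : nat * K -> K) (k0 : K) n (Y : Type) :
  injective e -> card_le_succ n K Y ->
  exists c : tup n.+1 Y -> 'I_n.+1 * K, axis_coloring c.
Proof.
move=> e_inj; elim: n Y => [|n IH] Y /=.
  case=> g g_inj; exists (fun x => (ord0, g (x ord0))) => x y m [_ xy_m] [/g_inj x0y0].
  by case: xy_m; rewrite (ord1 m).
case=> R [R_wo R_seg]; apply: (axis_coloring_step e_inj R_wo) => a; apply/IH.
apply: (card_le_succ_option (o := fun o => e (if o is Some u then (1, u) else (0, k0)))).
  by move=> [u|] [v|] // /e_inj [] // ->.
exact: R_seg.
Qed.

Theorem lemma1p4 (d k : nat) (A : Type) (P : tup d A -> Prop) (K X : Type) :
  1 <= d -> 2 <= k ->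
  template k P -> simple_template P ->
  infinite_type K ->
  card_le_succ d.-1 K X ->
  exists c : tup d X -> K, proper_coloring k P c.
Proof.
case: d P => // n P _ _ P_template P_simple K_inf X_card.
have [h h_inj] := infinite_bool_prod_inj K_inf.
have [e e_inj] := nat_prod_inj h_inj.
have [f _] := K_inf; have [x [_ [Px _]]] := P_simple ord0.
have [c c_axis] := axis_coloring_exists (f 0) e_inj X_card.
exists (fun x => e (val (c x).1, (c x).2)).
apply: (proper_coloring_inj (f := fun u => e (val u.1, u.2)) (ex_intro _ x Px)).
  by move=> [i u] [j v] /e_inj [/val_inj -> ->].
exact: axis_coloring_proper P_template P_simple c_axis.
Qed.
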